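(* Let ${}^*$ be a nonstandard analysis. Let $A_1,\dots,A_n$ be sets ($n\ge 1$), let $f:A_1\times\cdots\times A_n\to\{\mathrm{T},\mathrm{F}\}$, and define $g:A_2\times\cdots\times A_n\to\{\mathrm{T},\mathrm{F}\}$ by $g(x_2,\dots,x_n)=\mathrm{T}$ iff there exists $x_1\in A_1$ with $f(x_1,x_2,\dots,x_n)=\mathrm{T}$ (for $n=1$, $A_2\times\cdots\times A_n$ is a one-point set). Then for all $(y_2,\dots,y_n)\in{}^*A_2\times\cdots\times{}^*A_n$: $${}^*g(y_2,\dots,y_n)=\mathrm{T}\iff \exists\, y_1\in{}^*A_1\ \ {}^*f(y_1,y_2,\dots,y_n)=\mathrm{T}.$$ Consequently (together with the fact that ${}^*$ commutes with all maps between finite sets, i.e. with propositional connectives) ${}^*$ commutes with all first-order logical operations on $\{\mathrm T,\mathrm F\}$-valued predicates, quantifiers over $A$ becoming quantifiers over ${}^*A$.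
   Context: A nonstandard analysis is a functor ${}^*:\mathbf{Set}\to\mathbf{Set}$ (write ${}^*A$ for the image of a set $A$ and ${}^*f$ for the image of a map $f$) such that (i) it maps the full subcategory $\mathbf{Fin}$ of finite sets into itself and restricts to an equivalence of $\mathbf{Fin}$ with itself; (ii) it preserves finite projective limits (equivalently finite products and equalizers). Via the images of the projections, ${}^*(A_1\times\cdots\times A_n)$ is identified with ${}^*A_1\times\cdots\times{}^*A_n$; for $E\subseteq A$ the image of the inclusion is injective and ${}^*E$ is regarded as a subset of ${}^*A$. For every $a$, ${}^*\{a\}$ is a singleton whose element is denoted $\nu(a)$; for a finite set $F$ the map $\nu:F\to{}^*F$ is a bijection, and in particular ${}^*\{\mathrm T,\mathrm F\}$ is identified with $\{\mathrm T,\mathrm F\}$ via $\nu$. *)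

From mathcomp Require Import all_boot.
Set Implicit Arguments. Unset Strict Implicit. Unset Printing Implicit Defensive.

Definition finite_set (X : Type) : Prop :=
  exists n : nat, exists e : 'I_n -> X, bijective e.

(* A nonstandard analysis: a functor *:Set -> Set that
   (i) maps finite sets to finite sets and restricts to an equivalence
       (fully faithful + essentially surjective) of Fin with itself;
   (ii) preserves finite projective limits: terminal object, binary
       products and equalizers. *)
Record NSA := {
  ob :> Type -> Type;
  fmap : forall A B : Type, (A -> B) -> ob A -> ob B;
  (* functoriality; maps of Set are compared extensionally *)
  fmap_ext : forall A B (f g : A -> B), (forall x, f x = g x) ->
               forall z, fmap f z = fmap g z;
  fmap_id : forall A (z : ob A), fmap (fun x : A => x) z = z;
  fmap_comp : forall A B C (f : A -> B) (g : B -> C) (z : ob A),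
                fmap (fun x => g (f x)) z = fmap g (fmap f z);
  fin_pres : forall X, finite_set X -> finite_set (ob X);
  fin_full : forall X Y, finite_set X -> finite_set Y ->
               forall h : ob X -> ob Y, exists k : X -> Y,
                 forall z, fmap k z = h z;
  fin_faithful : forall X Y, finite_set X -> finite_set Y ->
               forall k k' : X -> Y, (forall z, fmap k z = fmap k' z) ->
                 forall x, k x = k' x;
  fin_esssurj : forall Y, finite_set Y ->
               exists X : Type, finite_set X /\
                 exists h : ob X -> Y, bijective h;
  (* (ii) terminal object: *{pt} is a singleton *)
  pt : ob unit;
  pt_unique : forall u : ob unit, u = pt;
  (* (ii) binary products: *(A*B) -> *A * *B is bijective *)
  prod_inj : forall A B (z z' : ob (A * B)%type),
               fmap fst z = fmap fst z' -> fmap snd z = fmap snd z' -> z = z';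
  prod_surj : forall A B (a : ob A) (b : ob B),
               exists z : ob (A * B)%type, fmap fst z = a /\ fmap snd z = b;
  (* (ii) equalizers: *{x | f x = g x} -> *A is injective with image
     {y | *f y = *g y} *)
  eq_inj : forall A B (f g : A -> B) (z z' : ob {x : A | f x = g x}),
               fmap (@proj1_sig _ _) z = fmap (@proj1_sig _ _) z' -> z = z';
  eq_img : forall A B (f g : A -> B) (y : ob A),
               fmap f y = fmap g y <->
               exists z : ob {x : A | f x = g x}, fmap (@proj1_sig _ _) z = y
}.

(* nu(a) : the unique element of *{a}, seen in *A (the singleton {a} is
   represented by unit, mapped to A by the constant map a). *)
Definition nu (S : NSA) (A : Type) (a : A) : S A :=
  fmap (n:=S) (fun _ : unit => a) (pt S).

From mathcomp Require Import all_boot.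
From Stdlib Require Import ClassicalEpsilon.

Set Implicit Arguments.
Unset Strict Implicit.

(* Truth values are transported through the preserved equalizers: [*p y = nu c]
   says that [y] lies in [*{x | p x = c}].  For [g = exists_A f], a choice of
   witnesses is a section of [snd] from [{y | g y}] into [{z | f z}], and its
   transfer produces the witness [y1]; conversely [snd] maps [{z | f z}] into
   [{y | g y}]. *)

Section Transfer.

Variable S : NSA.

Lemma fmap_const (X C : Type) (c : C) (z : S X) :
  fmap (n:=S) (fun _ : X => c) z = nu S c.
Proof.
by rewrite /nu (fmap_comp (fun _ : X => tt) (fun _ : unit => c))
  (pt_unique (fmap (n:=S) (fun _ : X => tt) z)).
Qed.

Lemma fmap_eq_nuP (X C : Type) (p : X -> C) (c : C) (y : S X) :
  fmap (n:=S) p y = nu S c <->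
  exists w : S {x : X | p x = c}, fmap (n:=S) (@proj1_sig _ _) w = y.
Proof.
rewrite -(fmap_const c y); exact: eq_img.
Qed.

Lemma fmap_comp_constant (X Y C : Type) (h : X -> Y) (p : Y -> C) (c : C) :
  (forall x, p (h x) = c) -> forall z : S X, fmap (n:=S) p (fmap (n:=S) h z) = nu S c.
Proof.
move=> hp z; rewrite -fmap_comp (fmap_ext (g:=fun _ => c)) //; exact: fmap_const.
Qed.

End Transfer.

Lemma exists_witness_map (A B : Type) (f : A * B -> bool) (g : B -> bool) :
  (forall y, g y = true -> exists x, f (x, y) = true) ->
  exists m : {y : B | g y = true} -> A, forall e, f (m e, proj1_sig e) = true.
Proof.
move=> hg; exists (fun e => proj1_sig (constructive_indefinite_description _
                                      (hg _ (proj2_sig e)))).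
by move=> e; case: constructive_indefinite_description.
Qed.

Theorem mainTheorem1 (S : NSA) (A B : Type) (f : A * B -> bool) (g : B -> bool)
  (hg : forall y : B, g y = true <-> exists x : A, f (x, y) = true) :
  forall y2 : S B,
    fmap (n:=S) g y2 = nu S true <->
    exists y1 : S A, exists z : S (A * B)%type,
      fmap (n:=S) fst z = y1 /\ fmap (n:=S) snd z = y2 /\ fmap (n:=S) f z = nu S true.
Proof.
move=> y2; split.
- move=> /fmap_eq_nuP [w <-].
  have [m hm] := exists_witness_map (fun y hy => proj1 (hg y) hy).
  pose section e := (m e, proj1_sig e).
  exists (fmap (n:=S) fst (fmap (n:=S) section w)), (fmap (n:=S) section w).
  split=> //; split; first by rewrite -fmap_comp.
  exact: fmap_comp_constant.
- move=> [_ [z [_ [<- /fmap_eq_nuP [w <-]]]]].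
  rewrite -fmap_comp; apply: fmap_comp_constant => -[[x y] /= hxy].
  by apply/hg; exists x.
Qed.
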